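(* Let $L:\mathbb{R}^d\times\mathbb{R}^{d+1}\to\mathbb{R}$ be such that $L(w,z)$ is convex in $w$, let $\nabla_1L(w,z)$ be a sub-gradient of $L(\cdot,z)$ at $w$, and assume there are constants $A,B\ge0$ with $\|\nabla_1 L(w,z)\|^2\le A L(w,z)+B$ for all $w\in\mathbb{R}^d$, $z\in\mathbb{R}^{d+1}$. Let $\eta>0$, $g\ge0$, $\theta\in[0,\infty]$, $w\in\mathbb{R}^d$, $z\in\mathbb{R}^{d+1}$, and let \[ w'=T_1\big(w-\eta\nabla_1L(w,z),\ g\eta,\ \theta\big). \] Then for all $\bar w\in\mathbb{R}^d$, \[ (1-0.5A\eta)L(w,z)+g\|w'\cdot I(|w'|\le\theta)\|_1\le L(\bar w,z)+g\|\bar w\cdot I(|w'|\le\theta)\|_1+\frac{\eta}{2}B+\frac{\|\bar w-w\|^2-\|\bar w-w'\|^2}{2\eta}. \]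
   Context: $\|\cdot\|$ is the Euclidean norm and $\|\cdot\|_1$ the $1$-norm. $T_1(v,\alpha,\theta)$ is applied coordinatewise: $T_1(v_j,\alpha,\theta)=\max(0,v_j-\alpha)$ if $v_j\in[0,\theta]$, $=\min(0,v_j+\alpha)$ if $v_j\in[-\theta,0]$, and $=v_j$ otherwise. For $v,v'\in\mathbb{R}^d$, $\|v\cdot I(|v'|\le\theta)\|_1=\sum_{j=1}^d|v_j|\,I(|v'_j|\le\theta)$ with $I$ the indicator function. *)

From HB Require Import structures.
From mathcomp Require Import all_boot all_order all_algebra.
From mathcomp Require Import reals constructive_ereal.
Set Implicit Arguments. Unset Strict Implicit. Unset Printing Implicit Defensive.
Import Order.TTheory GRing.Theory Num.Theory.
Local Open Scope ring_scope.

Section Defs.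
Variable R : realType.

Definition sqnorm (n : nat) (v : 'rV[R]_n) : R := \sum_(j < n) (v 0 j) ^+ 2.

Definition dotp (n : nat) (u v : 'rV[R]_n) : R := \sum_(j < n) u 0 j * v 0 j.

Definition masked_norm1 (n : nat) (v v' : 'rV[R]_n) (theta : \bar R) : R :=
  \sum_(j < n) `|v 0 j| * (if (`|v' 0 j|%:E <= theta)%E then 1 else 0).

Definition T1_coord (x alpha : R) (theta : \bar R) : R :=
  if (0 <= x) && (x%:E <= theta)%E then Num.max 0 (x - alpha)
  else if (x <= 0) && ((- x)%:E <= theta)%E then Num.min 0 (x + alpha)
  else x.

Definition T1 (n : nat) (v : 'rV[R]_n) (alpha : R) (theta : \bar R) : 'rV[R]_n :=
  \row_(j < n) T1_coord (v 0 j) alpha theta.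

Definition convex_fun (n : nat) (f : 'rV[R]_n -> R) : Prop :=
  forall (u v : 'rV[R]_n) (t : R), 0 <= t <= 1 ->
    f (t *: u + (1 - t) *: v) <= t * f u + (1 - t) * f v.

Definition is_subgradient (n : nat) (f : 'rV[R]_n -> R) (w s : 'rV[R]_n) : Prop :=
  forall u : 'rV[R]_n, f w + dotp s (u - w) <= f u.

End Defs.

From HB Require Import structures.
From mathcomp Require Import all_boot all_order all_algebra.
From mathcomp Require Import reals constructive_ereal.
From mathcomp Require Import ring lra.
Set Implicit Arguments.
Unset Strict Implicit.
Import Order.TTheory GRing.Theory Num.Theory.
Local Open Scope ring_scope.

(* The step w' is a gradient step v = w - eta s followed by T_1, which on every
   coordinate it touches is soft thresholding by g eta, the proximal map of
   g eta |.|.  Optimality of the proximal map gives, on each coordinate with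
   |w'_j| <= theta,
     2 g eta (|w'_j| - |wbar_j|) <= (wbar_j - v_j)^2 - (wbar_j - w'_j)^2,
   and the other coordinates are left unchanged.  Expanding
   ||wbar - v||^2 = ||wbar - w||^2 + 2 eta <s, wbar - w> + eta^2 ||s||^2, the
   cross term is bounded by the subgradient inequality and eta^2 ||s||^2 by
   the growth condition. *)

Section SoftThresholding.
Variable R : realType.

Lemma soft_threshold_prox (a x b : R) : 0 <= a -> 0 <= x ->
  2 * a * (`|Num.max 0 (x - a)| - `|b|)
    <= (b - x) ^+ 2 - (b - Num.max 0 (x - a)) ^+ 2.
Proof.
move=> a0 x0; rewrite /Order.max; case: ltrP => xa.
  rewrite ger0_norm; last by lra.
  by have [b0|b0] := lerP 0 b; [rewrite ger0_norm|rewrite ltr0_norm]; nra.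
rewrite normr0.
by have [b0|b0] := lerP 0 b; [rewrite ger0_norm|rewrite ltr0_norm]; nra.
Qed.

Lemma soft_threshold_prox_neg (a x b : R) : 0 <= a -> x <= 0 ->
  2 * a * (`|Num.min 0 (x + a)| - `|b|)
    <= (b - x) ^+ 2 - (b - Num.min 0 (x + a)) ^+ 2.
Proof.
move=> a0 x0.
have -> : Num.min 0 (x + a) = - Num.max 0 (- x - a).
  by rewrite oppr_max oppr0 opprD !opprK.
have sqrB_opp (u v : R) : (u - v) ^+ 2 = (- u - - v) ^+ 2 by ring.
rewrite normrN -(normrN b) (sqrB_opp b x) (sqrB_opp b) (opprK (- Num.max _ _)).
by apply: soft_threshold_prox; rewrite // oppr_ge0.
Qed.

Lemma T1_coord_prox (a x b : R) (theta : \bar R) : 0 <= a ->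
  let y := T1_coord x a theta in
  2 * a * ((`|y| - `|b|) * (if (`|y|%:E <= theta)%E then 1 else 0))
    <= (b - x) ^+ 2 - (b - y) ^+ 2.
Proof.
move=> a0 /=; rewrite /T1_coord.
case: ifP => [/andP[x0 xth] | not_pos].
  have -> : (`|Num.max 0 (x - a)|%:E <= theta)%E.
    apply: le_trans xth; rewrite lee_fin /Order.max.
    by case: ltrP => h; rewrite ?normr0 // ger0_norm; lra.
  by rewrite mulr1; apply: soft_threshold_prox.
case: ifP => [/andP[x0 xth] | not_neg].
  have -> : (`|Num.min 0 (x + a)|%:E <= theta)%E.
    apply: le_trans xth; rewrite lee_fin /Order.min.
    by case: ltrP => h; rewrite ?normr0 ?oppr_ge0 // ler0_norm; lra.
  by rewrite mulr1; apply: soft_threshold_prox_neg.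
have -> : (`|x|%:E <= theta)%E = false.
  have [x0|x0] := lerP 0 x; first by rewrite ger0_norm // -not_pos x0.
  by rewrite ltr0_norm // -not_neg (ltW x0).
by rewrite !mulr0 subrr.
Qed.

Lemma T1_prox (n : nat) (v b : 'rV[R]_n) (a : R) (theta : \bar R) : 0 <= a ->
  let y := T1 v a theta in
  2 * a * (masked_norm1 y y theta - masked_norm1 b y theta)
    <= sqnorm (b - v) - sqnorm (b - y).
Proof.
move=> a0 /=; rewrite /masked_norm1 /sqnorm -!sumrB mulr_sumr.
apply: ler_sum => j _; rewrite -mulrBl !mxE.
exact: T1_coord_prox.
Qed.

End SoftThresholding.

Lemma sqnormD_scale (R : realType) (n : nat) (u v : 'rV[R]_n) (k : R) :
  sqnorm (u + k *: v) = sqnorm u + 2 * k * dotp v u + k ^+ 2 * sqnorm v.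
Proof.
rewrite /sqnorm /dotp !mulr_sumr -!big_split /=.
by apply: eq_bigr => j _; rewrite !mxE; ring.
Qed.

Theorem lemma1 (R : realType) (d : nat)
  (L : 'rV[R]_d -> 'rV[R]_d.+1 -> R)
  (gradL : 'rV[R]_d -> 'rV[R]_d.+1 -> 'rV[R]_d)
  (A B : R)
  (hconv : forall z, convex_fun (fun w => L w z))
  (hsub : forall w z, is_subgradient (fun u => L u z) w (gradL w z))
  (hA : 0 <= A) (hB : 0 <= B)
  (hgrowth : forall w z, sqnorm (gradL w z) <= A * L w z + B)
  (eta g : R) (theta : \bar R)
  (heta : 0 < eta) (hg : 0 <= g) (htheta : (0 <= theta)%E)
  (w : 'rV[R]_d) (z : 'rV[R]_d.+1) :
  let w' := T1 (w - eta *: gradL w z) (g * eta) theta in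
  forall wbar : 'rV[R]_d,
    (1 - 2^-1 * A * eta) * L w z + g * masked_norm1 w' w' theta
    <= L wbar z + g * masked_norm1 wbar w' theta + eta / 2 * B
       + (sqnorm (wbar - w) - sqnorm (wbar - w')) / (2 * eta).
Proof.
move=> w' wbar; set s := gradL w z.
have /= prox := T1_prox (w - eta *: s) wbar theta (mulr_ge0 hg (ltW heta)).
have shift : wbar - (w - eta *: s) = (wbar - w) + eta *: s.
  by rewrite opprB addrA addrAC.
rewrite -/w' shift sqnormD_scale in prox.
have subgrad : 2 * eta * (L w z + dotp s (wbar - w)) <= 2 * eta * L wbar z.
  by rewrite ler_pM2l ?mulr_gt0 //; apply: hsub.
have growth : eta ^+ 2 * sqnorm s <= eta ^+ 2 * (A * L w z + B).
  by rewrite ler_pM2l ?exprn_gt0 ?hgrowth.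
rewrite -(@ler_pM2l _ (2 * eta)) ?mulr_gt0 //.
rewrite [X in _ <= X]mulrDr [X in _ <= _ + X]mulrCA mulfV ?mulr1; last by lra.
lra.
Qed.
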